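(* In a soft sequence heap with rank threshold $r_0=\lceil\lg(1/\epsilon)\rceil$, for every item $e$ contained in a sequence of rank $r$, we have $|C(e)|\le c_r$ and $|W(e)|\le w_r$, where $c_r=w_r=0$ for $r\le r_0$ and $c_r=w_r=2^{\lfloor (r-r_0)/2\rfloor}-1$ for $r>r_0$.
   Context: Soft sequence heap with error parameter $0<\epsilon<1$ and $r_0=\lceil \lg(1/\epsilon)\rceil$ ($\lg$ = binary logarithm). The heap stores a list of nonempty sequences of items, each sorted increasingly by key and having a nonnegative integer rank. Each item $e$ currently in a sequence carries a (possibly empty) corruption-set $C(e)$ and witness-set $W(e)$; a newly inserted item has both empty. The operation $\mathrm{reduce}(L)$ on a sorted sequence $L=e_1,\dots,e_m$: for every $1\le i<m/2$, the item $e_{2i}$ is removed from $L$, the items $\{e_{2i}\}\cup C(e_{2i})$ are added to $C(e_{2i+1})$, and the items $\{e_{2i}\}\cup W(e_{2i})$ are added to $W(e_{2i-1})$. A rank-$0$ sequence is created by inserting a single item. Merging two sequences of equal rank $r$ produces their sorted union, of rank $r+1$, with corruption- and witness-sets unchanged; if $r+1>r_0$ and $r+1-r_0$ is even, $\mathrm{reduce}$ is then applied to the result. Apart from $\mathrm{reduce}$, corruption- and witness-sets are only shrunk (by extract-min removing items from them or discarding them). *)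

From HB Require Import structures.
From mathcomp Require Import all_boot all_order all_algebra.
From mathcomp Require Import finmap.
From mathcomp Require Import all_classical all_reals all_analysis.
Set Implicit Arguments. Unset Strict Implicit. Unset Printing Implicit Defensive.
Import Order.TTheory GRing.Theory Num.Theory.

Local Open Scope fset_scope.

(* r0 = ceil(lg(1/eps)), lg = binary logarithm; nonnegative for 0 < eps < 1. *)
Definition r0_of (R : realType) (eps : R) : nat :=
  `|Num.ceil (ln (eps^-1) / ln 2)|%N.

Definition cbound (r0 r : nat) : nat :=
  if (r <= r0)%N then 0%N else (2 ^ (r - r0)./2 - 1)%N.

Section SoftSeqHeap.
Variables (T : choiceType) (d : Order.disp_t) (K : orderType d) (key : T -> K).

(* an item currently in a sequence together with its corruption-set C(e)
   and witness-set W(e) *)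
Definition entry := (T * {fset T} * {fset T})%type.
Definition ent_item (x : entry) : T := x.1.1.
Definition ent_C (x : entry) : {fset T} := x.1.2.
Definition ent_W (x : entry) : {fset T} := x.2.

(* a sequence: (rank, sorted list of entries) *)
Definition sseq := (nat * seq entry)%type.

Definition key_sorted (L : seq entry) : Prop :=
  sorted (fun a b => (key (ent_item a) <= key (ent_item b))%O) L.

(* e_{2i} = y is removed; {y} ∪ C(y) is added to C(z), z = e_{2i+1};
   {y} ∪ W(y) is added to W(x), x = e_{2i-1} *)
Definition addW (x y : entry) : entry :=
  (ent_item x, ent_C x, ent_W x `|` (ent_item y |` ent_W y)).
Definition addC (z y : entry) : entry :=
  (ent_item z, ent_C z `|` (ent_item y |` ent_C y), ent_W z).

(* red x l processes x :: l, x being at an odd position *)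
Fixpoint red (x : entry) (l : seq entry) : seq entry :=
  match l with
  | [::] => [:: x]
  | [:: y] => [:: x; y]
  | y :: z :: rest => addW x y :: red (addC z y) rest
  end.

Definition reduce (L : seq entry) : seq entry :=
  if L is x :: l then red x l else [::].

Definition merge_finish (r0 r' : nat) (L : seq entry) : seq entry :=
  if (r0 < r')%N && ~~ odd (r' - r0) then reduce L else L.

Inductive shrinks : seq entry -> seq entry -> Prop :=
| Sh_nil : shrinks [::] [::]
| Sh_drop x L L' : shrinks L L' -> shrinks (x :: L) L'
| Sh_keep e C W C' W' L L' :
    shrinks L L' -> C' `<=` C -> W' `<=` W ->
    shrinks ((e, C, W) :: L) ((e, C', W') :: L').

Inductive reachable (r0 : nat) : seq sseq -> Prop :=
| Re_nil : reachable r0 [::]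
| Re_perm H H' : reachable r0 H -> perm_eq H H' -> reachable r0 H'
| Re_meld H1 H2 : reachable r0 H1 -> reachable r0 H2 -> reachable r0 (H1 ++ H2)
| Re_insert H e :
    reachable r0 H -> reachable r0 ((0%N, [:: (e, fset0, fset0)]) :: H)
| Re_merge H r L1 L2 L :
    reachable r0 ((r, L1) :: (r, L2) :: H) ->
    key_sorted L -> perm_eq L (L1 ++ L2) ->
    reachable r0 ((r.+1, merge_finish r0 r.+1 L) :: H)
| Re_shrink H r L L' :
    reachable r0 ((r, L) :: H) -> shrinks L L' -> L' != [::] ->
    reachable r0 ((r, L') :: H)
| Re_shrink_del H r L :
    reachable r0 ((r, L) :: H) -> shrinks L [::] -> reachable r0 H.

End SoftSeqHeap.

From HB Require Import structures.
From mathcomp Require Import all_boot all_order all_algebra.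
From mathcomp Require Import finmap.
From mathcomp Require Import all_classical all_reals all_analysis.
From mathcomp Require Import zify.
Set Implicit Arguments. Unset Strict Implicit. Unset Printing Implicit Defensive.
Import Order.TTheory GRing.Theory Num.Theory.
Local Open Scope fset_scope.

(* We show that every reachable heap satisfies the invariant
   "every entry of a rank-r sequence has |C| <= c_r and |W| <= c_r", by
   induction on the derivation of reachability; the statement then reads off
   the invariant.  The value of eps plays no role: the invariant holds for any
   threshold r0.  Most heap operations preserve the invariant because c_r is
   nondecreasing in r (merging without reduce) or because sets only shrink.
   The one real step is reduce at a rank r+1 with r+1-r0 even and positive:
   each removed item e_{2i} moves {e_{2i}} ∪ C(e_{2i}) into the C-set of its
   right neighbour and {e_{2i}} ∪ W(e_{2i}) into the W-set of its left
   neighbour, so every surviving set grows from at most c_r to at most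
   2 c_r + 1, and 2 c_r + 1 <= c_{r+1} at such ranks. *)

Lemma cbound_mono r0 r : (cbound r0 r <= cbound r0 r.+1)%N.
Proof.
rewrite /cbound; case: (leqP r r0) => [//|lt_r0_r].
rewrite [(r.+1 <= r0)%N]leqNgt ltnS (ltnW lt_r0_r) /=.
by rewrite leq_sub2r // leq_pexp2l // half_leq // leq_sub2r.
Qed.

(* At the ranks where merging triggers reduce, the bound doubles (plus one):
   2 c_r + 1 <= c_{r+1}. *)
Lemma cbound_reduce r0 r : (r0 < r.+1)%N -> ~~ odd (r.+1 - r0) ->
  ((cbound r0 r).*2.+1 <= cbound r0 r.+1)%N.
Proof.
move=> lt_r0_r1 even_diff.
have lt_r0_r : (r0 < r)%N.
  rewrite ltn_neqAle -ltnS lt_r0_r1 andbT; apply/eqP=> r_eq.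
  by rewrite r_eq subSn // subnn in even_diff.
rewrite /cbound [(r <= r0)%N]leqNgt [(r.+1 <= r0)%N]leqNgt lt_r0_r lt_r0_r1 /=.
rewrite subSn ?(ltnW lt_r0_r) //= in even_diff *.
rewrite uphalf_half (negPn even_diff) /= expnS.
have := expn_gt0 2 (r - r0)./2; lia.
Qed.

Lemma card_fsetU_add (T : choiceType) (A B : {fset T}) (a : T) :
  (#|` A `|` (a |` B)| <= #|` A| + (#|` B|).+1)%N.
Proof.
apply: leq_trans (leq_card_fsetU _ _).1 _.
by rewrite leq_add2l cardfsU1; case: (a \notin B).
Qed.

Section Invariant.
Variables (T : choiceType) (d : Order.disp_t) (K : orderType d) (key : T -> K).

Definition entry_bounded (b : nat) (x : entry T) : bool :=
  (#|` ent_C x| <= b)%N && (#|` ent_W x| <= b)%N.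

Lemma entry_bounded_mono b b' (L : seq (entry T)) :
  (b <= b')%N -> all (entry_bounded b) L -> all (entry_bounded b') L.
Proof.
move=> le_b; apply: sub_all => x /andP[bC bW].
by rewrite /entry_bounded (leq_trans bC) // (leq_trans bW).
Qed.

(* One pass of red: the head x may already carry a C-set of size up to b'
   (inherited from a removed left neighbour), its W-set has at most b items,
   and all remaining entries are b-bounded; if 2b+1 <= b', the output is
   b'-bounded. *)
Lemma red_bounded b b' (x : entry T) (l : seq (entry T)) :
  (b.*2.+1 <= b')%N ->
  (#|` ent_C x| <= b')%N -> (#|` ent_W x| <= b)%N -> all (entry_bounded b) l ->
  all (entry_bounded b') (red x l).
Proof.
move=> le_b; elim: {l}(size l).+1 {-2}l x (ltnSn (size l)) => [//|n IH].
case=> [|y [|z rest]] x /= size_l xC xW.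
- by rewrite /entry_bounded xC /=; lia.
- by case/andP=> /andP[yC yW] _; rewrite /entry_bounded xC /=; lia.
case/and3P=> /andP[yC yW] /andP[zC zW] rest_b; apply/andP; split.
  rewrite /entry_bounded /addW /ent_C /ent_W /= xC /=.
  have := card_fsetU_add (ent_W x) (ent_W y) (ent_item y).
  by rewrite /ent_W in xW yW *; lia.
apply: IH => //; first by lia.
rewrite /addC /ent_C /=.
have := card_fsetU_add (ent_C z) (ent_C y) (ent_item y).
by rewrite /ent_C in yC zC *; lia.
Qed.

Lemma merge_finish_bounded r0 r (L : seq (entry T)) :
  all (entry_bounded (cbound r0 r)) L ->
  all (entry_bounded (cbound r0 r.+1)) (merge_finish r0 r.+1 L).
Proof.
rewrite /merge_finish; case: ifP => [/andP[lt_r0 even_diff]|_ L_b]; last first.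
  exact: entry_bounded_mono (cbound_mono _ _) L_b.
case: L => [//|x l] /= /andP[/andP[xC xW] l_b].
apply: red_bounded (cbound_reduce lt_r0 even_diff) _ xW l_b.
exact: leq_trans xC (cbound_mono _ _).
Qed.

Lemma shrinks_bounded b (L L' : seq (entry T)) :
  shrinks L L' -> all (entry_bounded b) L -> all (entry_bounded b) L'.
Proof.
elim=> //= [x {}L {}L' _ IH /andP[_ /IH] //|e C W C' W' {}L {}L' _ IH sC sW].
case/andP=> /andP[bC bW] /IH ->; rewrite andbT /entry_bounded /ent_C /ent_W /=.
rewrite /ent_C /ent_W /= in bC bW.
by rewrite (leq_trans (fsubset_leq_card sC)) // (leq_trans (fsubset_leq_card sW)).
Qed.

Definition heap_bounded (r0 : nat) (H : seq (sseq T)) : bool :=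
  all (fun s : sseq T => all (entry_bounded (cbound r0 s.1)) s.2) H.

Lemma reachable_heap_bounded r0 H : reachable key r0 H -> heap_bounded r0 H.
Proof.
rewrite /heap_bounded; elim=> //= {H}.
- by move=> H1 H2 _ IH perm_H; rewrite -(perm_all _ perm_H).
- by move=> H1 H2 _ IH1 _ IH2; rewrite all_cat IH1 IH2.
- move=> H r L1 L2 L _ /and3P[L1_b L2_b ->] _ perm_L; rewrite andbT.
  apply: merge_finish_bounded.
  by rewrite (perm_all _ perm_L) all_cat L1_b L2_b.
- move=> H r L L' _ /andP[L_b ->] shr _; rewrite andbT.
  exact: shrinks_bounded shr L_b.
- by move=> H r L _ /andP[_ ->].
Qed.

End Invariant.

Theorem lemma6 (R : realType) (eps : R) (Heps0 : (0 < eps)%R) (Heps1 : (eps < 1)%R)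
  (T : choiceType) (d : Order.disp_t) (K : orderType d) (key : T -> K)
  (H : seq (sseq T)) :
  reachable key (r0_of eps) H ->
  forall (r : nat) (L : seq (entry T)), (r, L) \in H ->
  forall (e : T) (C W : {fset T}), (e, C, W) \in L ->
  (#|` C| <= cbound (r0_of eps) r)%N /\ (#|` W| <= cbound (r0_of eps) r)%N.
Proof.
move=> /reachable_heap_bounded /allP H_b r L /H_b /allP L_b e C W /L_b.
by case/andP.
Qed.
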